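(* Let $H=(\mathcal{V},\mathcal{E})$ be the hypergraph representation of $\{\mathcal{I}_j\}$. Then $H$ is connected if and only if $\mathsf{M}^\star(\{\mathcal{I}_j\})<\left|\bigcup_j\mathcal{I}_j\right|$. Moreover, $\{\mathcal{I}_j\}$ is $1$-critical if and only if $\mathcal{E}$ is a minimal connected dominating edge set of $H$.
   Context: $\{\mathcal{I}_j\}=(\mathcal{I}_1,\dots,\mathcal{I}_n)$ is a family of finite sets (message indices held by clients $c_1,\dots,c_n$). $\mathsf{M}^\star(\{\mathcal{I}_j\})$ is the optimal value of: minimize $\sum_{j\in[n]}a_j$ over $a\in\mathbb{Z}^n$ subject to $\sum_{j\in\mathcal{S}}a_j\ge\left|\bigcap_{j\in[n]\setminus\mathcal{S}}\bar{\mathcal{I}}_j\right|$ for every nonempty proper $\mathcal{S}\subsetneq[n]$, where $\bar{\mathcal{I}}_j=(\bigcup_i\mathcal{I}_i)\setminus\mathcal{I}_j$. A family $\{\mathcal{I}_j\}$ is $1$-critical if (i) $|\bigcup_j\mathcal{I}_j|-\mathsf{M}^\star(\{\mathcal{I}_j\})=1$ and (ii) $\mathsf{M}^\star(\{\mathcal{I}_j\setminus\{i\}\})=\mathsf{M}^\star(\{\mathcal{I}_j\})$ for all $i\in\bigcup_j\mathcal{I}_j$. The hypergraph representation of $\{\mathcal{I}_j\}$ is the hypergraph (repeated edges allowed) with vertex set $\mathcal{V}=\{c_1,\dots,c_n\}$ and one hyperedge for each message index $e\in\bigcup_j\mathcal{I}_j$, where $c_j\in e$ iff $e\in\mathcal{I}_j$.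 For a hypergraph $H=(\mathcal{V},\mathcal{E})$, an edge set $\mathcal{E}'\subseteq\mathcal{E}$ is a minimal connected dominating edge set if $(\mathcal{V},\mathcal{E}')$ is connected and removing any edge from $\mathcal{E}'$ makes it disconnected. *)

From HB Require Import structures.
From mathcomp Require Import all_boot all_order all_algebra.
From Stdlib Require Import ClassicalEpsilon.
Set Implicit Arguments. Unset Strict Implicit. Unset Printing Implicit Defensive.
Import Order.TTheory GRing.Theory Num.Theory.

(* Messages live in a finite type T; client j : 'I_n holds the set I j. *)
Section Defs.
Variables (T : finType) (n : nat).

Definition msgs (I : 'I_n -> {set T}) : {set T} := \bigcup_(j < n) I j.

Definition cmpl (I : 'I_n -> {set T}) (j : 'I_n) : {set T} := msgs I :\: I j.

Definition feasible (I : 'I_n -> {set T}) (a : 'I_n -> int) : Prop :=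
  forall S : {set 'I_n}, S != set0 -> S != setT ->
    (#|\bigcap_(j in ~: S) cmpl I j|%:Z <= \sum_(j in S) a j)%R.

Definition is_opt_value (I : 'I_n -> {set T}) (m : int) : Prop :=
  (exists a, feasible I a /\ (\sum_(j < n) a j)%R = m) /\
  (forall a, feasible I a -> (m <= \sum_(j < n) a j)%R).

(* M*({I_j}) : the optimal value (the minimum exists whenever n >= 2) *)
Definition Mstar (I : 'I_n -> {set T}) : int :=
  epsilon (inhabits 0%R) (is_opt_value I).

(* Hypergraph representation: vertices 'I_n (clients), one hyperedge per
   message e, and c_j \in e iff e \in I j.  A sub-collection of hyperedges is
   given as a set E' of messages.  (V, E') is connected iff any two vertices are
   joined by a path in which consecutive vertices share a hyperedge of E'. *)
Definition hadj (I : 'I_n -> {set T}) (E' : {set T}) : rel 'I_n :=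
  fun x y => [exists e in E', (e \in I x) && (e \in I y)].

Definition hconnected (I : 'I_n -> {set T}) (E' : {set T}) : Prop :=
  forall x y : 'I_n, connect (hadj I E') x y.

Definition min_conn_dom (I : 'I_n -> {set T}) (E' : {set T}) : Prop :=
  [/\ E' \subset msgs I, hconnected I E' &
      forall e, e \in E' -> ~ hconnected I (E' :\ e)].

Definition one_critical (I : 'I_n -> {set T}) : Prop :=
  (#|msgs I|%:Z - Mstar I = 1)%R /\
  (forall i, i \in msgs I -> Mstar (fun j => I j :\ i) = Mstar I).

End Defs.

From HB Require Import structures.
From mathcomp Require Import all_boot all_order all_algebra.
From mathcomp Require Import zify.
From Stdlib Require Import ClassicalEpsilon Classical.
Import Order.TTheory GRing.Theory Num.Theory.
Local Open Scope ring_scope.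
Set Implicit Arguments. Unset Strict Implicit. Unset Printing Implicit Defensive.

(* If the hypergraph splits into two sides with no hyperedge meeting both,
   every message counts in the constraint of one of the two sides, so any
   feasible a has total at least |U|.  If it is connected, root a BFS tree at r
   and charge each message to its holder closest to r, minus one at r: a
   nonempty proper S containing r has a client outside S whose BFS parent edge
   is charged inside S but is held outside, which pays for the -1.  Hence
   connectivity is exactly M* < |U|.  Deleting a message i never increases
   M*, and the family without i is the hypergraph with edge set U \ i; so
   1-criticality says that removing any edge raises |U| - M* to zero, i.e.
   disconnects H. *)

Lemma connect_rank (V : finType) (e : rel V) (r : V) :
  (forall j, connect e r j) ->
  exists f : V -> nat, forall j, j != r -> exists2 x, e x j & (f x < f j)%N.
Proof.
move=> conn.
pose reach j k := [exists p : k.-tuple V, path e r p && (last r p == j)].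
have reachP j : exists k, reach j k.
  case/connectP: (conn j) => p pth ->; exists (size p).
  by apply/existsP; exists (in_tuple p); rewrite pth eqxx.
exists (fun j => ex_minn (reachP j)) => j jr.
case: ex_minnP => k /existsP[[p /= /eqP size_p] /andP[pth /eqP last_p]] kmin.
case/lastP: p size_p pth last_p => [|q x] size_p.
  by move=> _ /= rj; rewrite rj eqxx in jr.
rewrite rcons_path last_rcons => /andP[pth exj] xj.
exists (last r q); first by rewrite -xj.
case: ex_minnP => k' _ /(_ (size q)) k'q; apply: leq_ltn_trans (k'q _) _.
  by apply/existsP; exists (in_tuple q); rewrite pth eqxx.
by rewrite -size_p size_rcons.
Qed.

Lemma sum_card_fiber (A J : finType) (U : {set A}) (d : A -> J) (S : {set J}) :
  (\sum_(j in S) #|[set m in U | d m == j]|)%N = #|[set m in U | d m \in S]|.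
Proof.
rewrite -sum1_card (partition_big d (mem S)) /=; last by move=> m /setIdP[].
apply: eq_bigr => j jS; rewrite -sum1_card; apply: eq_bigl => m; rewrite !inE.
by case: eqP => [->|]; rewrite ?jS ?andbT ?andbF.
Qed.

Lemma sum_indicator (J : finType) (S : {set J}) (r : J) :
  \sum_(j in S) (j == r)%:Z = (r \in S)%:Z.
Proof.
case: (boolP (r \in S)) => rS.
  by rewrite (bigD1 r) //= eqxx big1 ?addr0 // => j /andP[_ /negbTE->].
by rewrite big1 // => j jS; case: eqP => // jr; rewrite -jr jS in rS.
Qed.

Lemma setC_witness (J : finType) (S : {set J}) : S != setT -> exists j, j \in ~: S.
Proof.
by move=> ST; apply/set0Pn; apply: contra ST => /eqP S0; rewrite -[S]setCK S0 setC0.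
Qed.

Section OptimalValue.

Variables (T : finType) (n : nat) (I : 'I_n -> {set T}).
Hypothesis n_ge2 : (2 <= n)%N.

Lemma feasible_ge0 a : feasible I a -> forall j, 0 <= a j.
Proof.
move=> fa j; have := fa [set j]; rewrite big_set1 => fa_j.
apply: le_trans (fa_j _ _) => //; first by apply/set0Pn; exists j; rewrite inE.
apply/negP => /eqP jT; have := cards1 j.
by rewrite jT cardsT card_ord => n1; move: n_ge2; rewrite n1.
Qed.

Lemma feasible_sum_ge0 a : feasible I a -> 0 <= \sum_(j < n) a j.
Proof. by move=> fa; apply: sumr_ge0 => j _; exact: feasible_ge0. Qed.

Lemma feasible_const_card : feasible I (fun=> #|msgs I|%:Z).
Proof.
move=> S S0 ST; rewrite sumr_const -mulr_natr natz -PoszM lez_nat.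
have [j0 j0S] := setC_witness ST.
apply: (@leq_trans #|msgs I|); last by rewrite leq_pmulr // card_gt0.
by apply/subset_leq_card/(bigcap_min j0 j0S); exact: subsetDl.
Qed.

Lemma opt_value_exists : exists m, is_opt_value I m.
Proof.
apply: NNPP => no_opt.
suff no_sum k : ~ exists a, feasible I a /\ \sum_(j < n) a j = k%:Z.
  have fc := feasible_const_card; apply: (no_sum (absz (\sum_(j < n) #|msgs I|%:Z))).
  by exists (fun=> #|msgs I|%:Z); rewrite gez0_abs ?(feasible_sum_ge0 fc).
elim/ltn_ind: k => k IH [a [fa suma]]; apply: no_opt; exists k%:Z.
split; first by exists a.
move=> b fb; rewrite leNgt; apply/negP => ltbk; apply: (IH (absz (\sum_(j < n) b j))).
  by rewrite -ltz_nat gez0_abs ?(feasible_sum_ge0 fb).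
by exists b; rewrite gez0_abs ?(feasible_sum_ge0 fb).
Qed.

Lemma Mstar_opt : is_opt_value I (Mstar I).
Proof. by apply: epsilon_spec; exact: opt_value_exists. Qed.

Lemma Mstar_le_sum a : feasible I a -> Mstar I <= \sum_(j < n) a j.
Proof. by case: Mstar_opt => _; apply. Qed.

Lemma Mstar_ge m : (forall a, feasible I a -> m <= \sum_(j < n) a j) -> m <= Mstar I.
Proof. by case: Mstar_opt => [[a [fa <-]] _]; apply. Qed.

Lemma Mstar_ge0 : 0 <= Mstar I.
Proof. by case: Mstar_opt => [[a [fa <-]] _]; exact: feasible_sum_ge0. Qed.

End OptimalValue.

Section Deletion.

Variables (T : finType) (n : nat) (I : 'I_n -> {set T}) (i : T).

Local Notation Ii := (fun j => I j :\ i).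

Lemma msgsD1 : msgs Ii = msgs I :\ i.
Proof.
apply/setP => e; rewrite /msgs !inE; apply/bigcupP/andP.
  by case=> j _; rewrite !inE => /andP[-> ej]; split => //; apply/bigcupP; exists j.
by case=> ei /bigcupP[j _ ej]; exists j => //; rewrite !inE ei.
Qed.

Lemma feasibleD1 a : feasible I a -> feasible Ii a.
Proof.
move=> fa S S0 ST; apply: le_trans (fa S S0 ST); rewrite lez_nat.
apply/subset_leq_card/subsetP => e /bigcapP ecap; apply/bigcapP => j jS.
move: (ecap j jS); rewrite /cmpl msgsD1 !inE => /andP[nej /andP[ei eU]].
by rewrite eU andbT; apply: contra nej => ej; rewrite ei ej.
Qed.

Lemma MstarD1_le : (2 <= n)%N -> Mstar Ii <= Mstar I.
Proof.
move=> n2; case: (Mstar_opt I n2) => [[a [fa <-]] _].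
by apply: Mstar_le_sum => //; exact: feasibleD1.
Qed.

Lemma hconnectedD1 : hconnected I (msgs I :\ i) <-> hconnected Ii (msgs Ii).
Proof.
have adjE : hadj I (msgs I :\ i) =2 hadj Ii (msgs Ii).
  move=> x y; rewrite /hadj msgsD1; apply: eq_existsb => m; rewrite !inE.
  by case: (m == i).
by split=> conn x y; [rewrite -(eq_connect adjE) | rewrite (eq_connect adjE)].
Qed.

End Deletion.

Section Connectivity.

Variables (T : finType) (n : nat) (I : 'I_n -> {set T}).

Local Notation U := (msgs I).
Local Notation adj := (hadj I (msgs I)).
Local Notation held_only_in S := (\bigcap_(j in ~: S) cmpl I j).

Lemma msgs_sub_held_only_in (S : {set 'I_n}) :
  (forall x y, x \in S -> adj x y -> y \in S) ->
  U \subset held_only_in S :|: \bigcap_(j in S) cmpl I j.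
Proof.
move=> closedS; apply/subsetP => m mU; rewrite inE.
case: (boolP [exists w in ~: S, m \in I w]) => [/existsP[w /andP[wS mw]]|nw].
  apply/orP; right; apply/bigcapP => j jS; rewrite /cmpl !inE mU andbT.
  apply: contraL wS => mj; rewrite inE negbK; apply: closedS jS _.
  by apply/existsP; exists m; rewrite mU mj mw.
apply/orP; left; apply/bigcapP => j jS; rewrite /cmpl !inE mU andbT.
by apply: contra nw => mj; apply/existsP; exists j; rewrite jS mj.
Qed.

Lemma disconnected_sum_ge a :
  ~ hconnected I U -> feasible I a -> #|U|%:Z <= \sum_(j < n) a j.
Proof.
move=> disconn fa.
have [x [y nxy]] : exists x y, ~ connect adj x y.
  apply: NNPP => conn; apply: disconn => x y.
  by apply: NNPP => nxy; apply: conn; exists x, y.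
pose S := [set z | connect adj x z].
have xS : x \in S by rewrite inE connect0.
have yS : y \in ~: S by rewrite !inE; apply/negP.
have S_neq0 : S != set0 by apply/set0Pn; exists x.
have S_neqT : S != setT by apply: contraTneq yS => ->; rewrite setCT inE.
have CS_neq0 : ~: S != set0 by apply/set0Pn; exists y.
have CS_neqT : ~: S != setT by apply: contraTneq xS => /setP/(_ x); rewrite !inE => ->.
have closedS z w : z \in S -> adj z w -> w \in S.
  by rewrite !inE => xz zw; apply: connect_trans xz (connect1 zw).
rewrite (bigID (mem S)) /=.
have -> : \sum_(j < n | j \notin S) a j = \sum_(j in ~: S) a j.
  by apply: eq_bigl => j; rewrite in_setC.
have := fa _ CS_neq0 CS_neqT; rewrite setCK => faCS.
apply: le_trans (lerD (fa S S_neq0 S_neqT) faCS).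
rewrite -PoszD lez_nat.
apply: leq_trans (subset_leq_card (msgs_sub_held_only_in closedS)) _.
by rewrite cardsU leq_subr.
Qed.

Lemma connected_feasible :
  (0 < n)%N -> hconnected I U ->
  exists a, feasible I a /\ \sum_(j < n) a j = #|U|%:Z - 1.
Proof.
move=> n_gt0 conn; pose r := Ordinal n_gt0.
have [f f_parent] := connect_rank (conn r).
have [d dP] : exists d : T -> 'I_n, forall m, m \in U ->
    m \in I (d m) /\ forall j, m \in I j -> (f (d m) <= f j)%N.
  suff holder m : exists j : 'I_n, m \in U ->
      m \in I j /\ forall j', m \in I j' -> (f j <= f j')%N.
    exact: fin_all_exists holder.
  case: (boolP (m \in U)) => [/bigcupP[j0 _ mj0]|]; last by exists r.
  by exists [arg min_(j < j0 | m \in I j) f j]; case: arg_minnP.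
pose a j := #|[set m in U | d m == j]|%:Z - (j == r)%:Z.
have sum_a (S : {set 'I_n}) :
    \sum_(j in S) a j = #|[set m in U | d m \in S]|%:Z - (r \in S)%:Z.
  by rewrite sumrB sum_indicator -sum_card_fiber (big_morph Posz PoszD (erefl 0%:Z)).
exists a; split; last first.
  have -> : U = [set m in U | d m \in setT] by apply/setP => m; rewrite !inE andbT.
  transitivity (\sum_(j in setT) a j); first by apply: eq_bigl => j; rewrite in_setT.
  by rewrite sum_a in_setT.
move=> S S_neq0 S_neqT; rewrite sum_a.
have [j0 j0S] := setC_witness S_neqT.
have held_sub : held_only_in S \subset [set m in U | d m \in S].
  apply/subsetP => m /bigcapP held; have /setDP[mU _] := held j0 j0S.
  rewrite inE mU /=; have [mdm _] := dP m mU; apply: contraT => dmS.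
  by have := held (d m); rewrite in_setC dmS => /(_ isT)/setDP[_]; rewrite mdm.
case: (boolP (r \in S)) => rS; last by rewrite subr0 lez_nat subset_leq_card.
(* The client outside S closest to r has its parent edge charged inside S. *)
case: (@arg_minnP _ j0 (fun j => j \in ~: S) f j0S) => jm jmS jm_min.
have jm_r : jm != r by apply: contraTneq jmS => ->; rewrite in_setC rS.
have [x /existsP[m /and3P[mU mx mjm]] fx] := f_parent jm jm_r.
have [_ dm_min] := dP m mU.
have dmS : d m \in S.
  apply: contraT => dmS; have := jm_min (d m); rewrite inE dmS => /(_ isT).
  by move/leq_trans/(_ (dm_min x mx)); rewrite leqNgt fx.
have : held_only_in S \proper [set m in U | d m \in S].
  apply/properP; split=> //; exists m; first by rewrite inE mU dmS.
  by apply/bigcapP => /(_ jm jmS)/setDP[_]; rewrite mjm.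
move/proper_card; lia.
Qed.

Lemma hconnected_Mstar_lt : (2 <= n)%N -> hconnected I U <-> Mstar I < #|U|%:Z.
Proof.
move=> n2; split=> [conn|ltMU].
  have [a [fa suma]] := connected_feasible (ltnW n2) conn.
  by apply: le_lt_trans (Mstar_le_sum n2 fa) _; rewrite suma gtrBl.
apply: NNPP => disconn.
by have := Mstar_ge n2 (fun a => disconnected_sum_ge disconn); rewrite leNgt ltMU.
Qed.

End Connectivity.

Lemma disconnectedD1_iff (T : finType) (n : nat) (I : 'I_n -> {set T}) i :
  (2 <= n)%N -> i \in msgs I ->
  ~ hconnected I (msgs I :\ i) <-> #|msgs I|%:Z - 1 <= Mstar (fun j => I j :\ i).
Proof.
move=> n2 iU; rewrite hconnectedD1 hconnected_Mstar_lt // msgsD1 leNgt.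
have := cardsD1 i (msgs I); rewrite iU add1n => ->.
by rewrite -addn1 PoszD addrK; split=> /negP.
Qed.

Theorem lemma4 (T : finType) (n : nat) (I : 'I_n -> {set T}) :
  (2 <= n)%N ->
  (hconnected I (msgs I) <-> (Mstar I < #|msgs I|%:Z)%R) /\
  (one_critical I <-> min_conn_dom I (msgs I)).
Proof.
move=> n2; split; first exact: hconnected_Mstar_lt.
split=> [[gap crit]|[_ conn minimal]].
  split=> //; first by apply/hconnected_Mstar_lt => //; lia.
  by move=> i iU; apply/disconnectedD1_iff => //; rewrite crit //; lia.
have ltMU := (hconnected_Mstar_lt I n2).1 conn.
have [i0 i0U] : exists i, i \in msgs I.
  by apply/set0Pn; rewrite -card_gt0 -ltz_nat; exact: le_lt_trans (Mstar_ge0 I n2) ltMU.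
have geD1 i : i \in msgs I -> #|msgs I|%:Z - 1 <= Mstar (fun j => I j :\ i).
  by move=> iU; apply/(disconnectedD1_iff n2 iU)/minimal.
have MstarE : Mstar I = #|msgs I|%:Z - 1.
  by have := geD1 i0 i0U; have := MstarD1_le I i0 n2; lia.
split=> [|i iU]; first lia.
by have := geD1 i iU; have := MstarD1_le I i n2; lia.
Qed.
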